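(* Let $(E,\mathcal L)$ be a local representation over an infinite set $B$, and let $\gamma_B:E\to{}^*B$ be the map $e\mapsto$ (class modulo $\mathcal L$ of $\psi\mapsto\psi_e$), where ${}^*B$ is taken in the nonstandard analysis induced by $(E,\mathcal L)$. The following are equivalent: (i) there exists a nonstandard analysis whose induced local representation on $B$ is isomorphic to $(E,\mathcal L)$; (ii) the nonstandard analysis induced by $(E,\mathcal L)$ induces on $B$ a local representation isomorphic to $(E,\mathcal L)$. When these hold, $\gamma_B$ is such an isomorphism.
   Context: A nonstandard analysis is a functor ${}^*:\mathbf{Set}\to\mathbf{Set}$ (images ${}^*A$, ${}^*f$) which (i) maps the full subcategory $\mathbf{Fin}$ of finite sets into itself as a self-equivalence and (ii) preserves finite products and equalizers; thus ${}^*(A_1\times\dots\times A_n)={}^*A_1\times\dots\times{}^*A_n$ and for $R\subseteq A_1\times\dots\times A_n$, ${}^*R\subseteq{}^*A_1\times\dots\times{}^*A_n$. For sets $B,E$, the cylinder Boolean algebra of $B^E$ consists of the subsets $\{\psi\in B^E:(\psi_{e_1},\dots,\psi_{e_n})\in R\}$ with $e_i\in E$, $R\subseteq B^n$. A local representation over $B$ is a pair $(E,\mathcal L)$ with $\mathcal L$ an ultrafilter on the cylinder Boolean algebra of $B^E$; $R\subseteq B^n$ ${}^*$-holds for $(e_1,\dots,e_n)\in E^n$ if $\{\psi:(\psi_{e_1},\dots,\psi_{e_n})\in R\}\in\mathcal L$. An isomorphism of local representations over $B$ is a bijection $\theta:E\to E'$ such that $R$ ${}^*$-holds for $(e_1,\dots,e_n)$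 iff it ${}^*$-holds for $(\theta e_1,\dots,\theta e_n)$, for all $n$, $e_i$, $R$. A nonstandard analysis induces on $B$ the local representation $E={}^*B$ in which $R$ ${}^*$-holds for $(e_1,\dots,e_n)$ iff $(e_1,\dots,e_n)\in{}^*R$. The nonstandard analysis induced by $(E,\mathcal L)$: ${}^*X$ is the set of maps $B^E\to X$ depending on finitely many coordinates, modulo equality on a member of $\mathcal L$; ${}^*g([\phi])=[g\circ\phi]$. A local representation satisfying (i)/(ii) is called rectified. *)

From mathcomp Require Import all_boot.
From Stdlib Require Import ClassicalEpsilon.


Definition finite_type (A : Type) : Prop :=
  exists n (f : 'I_n -> A), bijective f.

Record PreFunctor := {
  pobj : Type -> Type;
  pmap : forall A B : Type, (A -> B) -> pobj A -> pobj B }.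

Arguments pmap p [A B] f x.

Definition functor_laws (F : PreFunctor) : Prop :=
  (forall A (x : pobj F A), pmap F (fun a : A => a) x = x) /\
  (forall A B C (f : A -> B) (g : B -> C) (x : pobj F A),
      pmap F (fun a => g (f a)) x = pmap F g (pmap F f x)).

Definition fin_self_equivalence (F : PreFunctor) : Prop :=
  (forall A, finite_type A -> finite_type (pobj F A)) /\
  (forall A B, finite_type A -> finite_type B ->
      bijective (fun f : A -> B => pmap F f)) /\
  (forall C, finite_type C ->
      exists A, finite_type A /\ exists f : pobj F A -> C, bijective f).

(* (ii) preservation of finite products: the canonical comparison map
   *(prod_i A_i) -> prod_i *(A_i) is bijective (n = 0: terminal object) *)
Definition preserves_finite_products (F : PreFunctor) : Prop :=
  forall n (A : 'I_n -> Type),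
    bijective (fun x : pobj F (forall i, A i) =>
                 fun i => pmap F (fun f : (forall j, A j) => f i) x).

Definition preserves_equalizers (F : PreFunctor) : Prop :=
  forall A B (f g : A -> B),
    injective (pmap F (@proj1_sig A (fun a => f a = g a))) /\
    forall x : pobj F A,
      (exists y, pmap F (@proj1_sig A (fun a => f a = g a)) y = x)
      <-> pmap F f x = pmap F g x.

Record NonstandardAnalysis := {
  nsa_F :> PreFunctor;
  nsa_functor : functor_laws nsa_F;
  nsa_fin : fin_self_equivalence nsa_F;
  nsa_prod : preserves_finite_products nsa_F;
  nsa_eq : preserves_equalizers nsa_F }.

(* Local representation induced on B by a functor F: E = *B, and
   R ⊆ B^n *-holds for (x_1,..,x_n) iff (x_1,..,x_n) ∈ *R, where *R is
   viewed inside ( *B)^n via *(incl) followed by the comparison map. *)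
Definition functor_holds (F : PreFunctor) (B : Type) (n : nat)
    (R : ('I_n -> B) -> Prop) (x : 'I_n -> pobj F B) : Prop :=
  exists y : pobj F {v : 'I_n -> B | R v},
    forall i, pmap F (fun s : {v : 'I_n -> B | R v} => proj1_sig s i) y = x i.

Definition cylinder (B E : Type) (C : (E -> B) -> Prop) : Prop :=
  exists n (e : 'I_n -> E) (R : ('I_n -> B) -> Prop),
    forall psi, C psi <-> R (fun i => psi (e i)).

Definition cyl_ultrafilter (B E : Type) (L : ((E -> B) -> Prop) -> Prop) :=
  (forall C, L C -> cylinder B E C) /\
  L (fun _ => True) /\
  ~ L (fun _ => False) /\
  (forall C D, L C -> L D -> L (fun psi => C psi /\ D psi)) /\
  (forall C D, L C -> cylinder B E D -> (forall psi, C psi -> D psi) -> L D) /\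
  (forall C, cylinder B E C -> L C \/ L (fun psi => ~ C psi)).

Record LocalRep (B : Type) := {
  lr_E : Type;
  lr_L : ((lr_E -> B) -> Prop) -> Prop;
  lr_ultra : cyl_ultrafilter B lr_E lr_L }.

Definition lr_holds (B : Type) (LR : LocalRep B) (n : nat)
    (R : ('I_n -> B) -> Prop) (e : 'I_n -> lr_E B LR) : Prop :=
  @lr_L B LR (fun psi => R (fun i => psi (e i))).

Definition is_iso_to_functor_rep (B : Type) (LR : LocalRep B) (F : PreFunctor)
    (theta : lr_E B LR -> pobj F B) : Prop :=
  bijective theta /\
  forall n (R : ('I_n -> B) -> Prop) (e : 'I_n -> lr_E B LR),
    lr_holds B LR n R e <-> functor_holds F B n R (fun i => theta (e i)).

Definition iso_to_functor_rep (B : Type) (LR : LocalRep B) (F : PreFunctor) :=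
  exists theta, is_iso_to_functor_rep B LR F theta.

Section Induced.
Variables (B : Type) (LR : LocalRep B).
Let E := lr_E B LR.
Let L := @lr_L B LR.

Definition findep (X : Type) (phi : (E -> B) -> X) : Prop :=
  exists n (e : 'I_n -> E), forall psi psi',
    (forall i, psi (e i) = psi' (e i)) -> phi psi = phi psi'.

Definition eqL (X : Type) (phi phi' : (E -> B) -> X) : Prop :=
  exists C, L C /\ forall psi, C psi -> phi psi = phi' psi.

Definition cls (X : Type) (phi : (E -> B) -> X) : ((E -> B) -> X) -> Prop :=
  fun phi' => findep X phi' /\ eqL X phi phi'.

(* *X := finitely-dependent maps modulo L-equality (as equivalence classes) *)
Definition starT (X : Type) : Type :=
  {P : ((E -> B) -> X) -> Prop | exists phi, findep X phi /\ P = cls X phi}.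

Lemma findep_comp (X Y : Type) (g : X -> Y) (phi : (E -> B) -> X) :
  findep X phi -> findep Y (fun psi => g (phi psi)).
Proof.
move=> [n [e He]]; exists n, e => psi psi' H; by rewrite (He psi psi' H).
Qed.

Definition starClass (X : Type) (phi : (E -> B) -> X) (h : findep X phi) : starT X :=
  exist _ (cls X phi) (ex_intro _ phi (conj h erefl)).

Definition starRep (X : Type) (x : starT X) :=
  constructive_indefinite_description _ (proj2_sig x).

(* *g [phi] = [g o phi] *)
Definition starMap (X Y : Type) (g : X -> Y) (x : starT X) : starT Y :=
  let r := starRep X x in
  starClass Y _ (findep_comp X Y g _ (proj1 (proj2_sig r))).

Definition inducedNSA : PreFunctor :=
  {| pobj := starT; pmap := starMap |}.

Lemma findep_eval (e : E) : findep B (fun psi : E -> B => psi e).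
Proof.
exists 1, (fun _ => e) => psi psi' H; exact: (H ord0).
Qed.

Definition gammaB (e : E) : pobj inducedNSA B := starClass B _ (findep_eval e).

End Induced.

From Pilot Require Import Defs.
From mathcomp Require Import all_boot.
From Stdlib Require Import ClassicalEpsilon Classical FunctionalExtensionality PropExtensionality ProofIrrelevance.

Set Implicit Arguments.
Unset Strict Implicit.
Unset Printing Implicit Defensive.

(* An isomorphism [theta] from (E, L) onto the local representation of some
   nonstandard analysis N makes (E, L) rectified: for f : B^n -> B and e in E^n,
   the point *f (theta e) lies in *(graph f), so its preimage e' under theta
   satisfies [psi e' = f (psi o e)] for L-almost every psi.  Every element of *B
   in the induced analysis is the class of some [psi |-> f (psi o e)], hence
   gamma_B is onto; it is one-to-one because *-holding of the diagonal forces
   equality in any functor; and it transports *-holding in general by the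
   ultrafilter property.  Conversely the induced functor is a nonstandard
   analysis, which is the remaining implication. *)

Lemma inj_surj_bijective (A C : Type) (g : A -> C) :
  injective g -> (forall y, exists x, g x = y) -> bijective g.
Proof.
move=> g_inj g_surj.
pose ginv y := proj1_sig (constructive_indefinite_description _ (g_surj y)).
have ginvK y : g (ginv y) = y by rewrite /ginv; case: constructive_indefinite_description.
by exists ginv => // x; apply: g_inj; rewrite ginvK.
Qed.

Lemma sval_inj (A : Type) (P : A -> Prop) : injective (@proj1_sig A P).
Proof. by apply: eq_sig_hprop => x; apply: proof_irrelevance. Qed.

Definition sig_retract (A : Type) (P : A -> Prop) (s0 : {a | P a}) (a : A) : {a | P a} :=
  match excluded_middle_informative (P a) with
  | left Pa => exist P a Pa
  | right _ => s0
  end.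

Lemma sig_retractK (A : Type) (P : A -> Prop) (s0 : {a | P a}) (a : A) :
  P a -> proj1_sig (sig_retract s0 a) = a.
Proof. by move=> Pa; rewrite /sig_retract; case: excluded_middle_informative. Qed.

Definition no_index (X : Type) : 'I_0 -> X := fun i => False_rect X (notF (ltn_ord i)).

Definition extend (X : Type) n (v : 'I_n -> X) (x : X) : 'I_n.+1 -> X :=
  fun j => if unlift ord_max j is Some i then v i else x.

Lemma extend_max (X : Type) n (v : 'I_n -> X) x : extend v x ord_max = x.
Proof. by rewrite /extend unlift_none. Qed.

Lemma extend_lift (X : Type) n (v : 'I_n -> X) x i : extend v x (lift ord_max i) = v i.
Proof. by rewrite /extend liftK. Qed.

Lemma extend_comp (X Y : Type) n (g : X -> Y) (v : 'I_n -> X) x :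
  (fun j => g (extend v x j)) = extend (fun i => g (v i)) (g x).
Proof.
by apply: functional_extensionality => j; case: (unliftP ord_max j) => [i ->|->];
  rewrite ?extend_lift ?extend_max.
Qed.

Definition graph (B : Type) n (f : ('I_n -> B) -> B) (v : 'I_n.+1 -> B) : Prop :=
  v ord_max = f (fun i => v (lift ord_max i)).

Lemma graph_extend (B : Type) n (f : ('I_n -> B) -> B) v : graph f (extend v (f v)).
Proof.
rewrite /graph extend_max; congr f.
by apply: functional_extensionality => i; rewrite extend_lift.
Qed.

Lemma functor_holds_diag (F : PreFunctor) (B : Type) (x y : pobj F B) :
  functor_holds F B 2 (graph (fun v : 'I_1 -> B => v ord0)) (extend (fun _ => x) y) ->
  y = x.
Proof.
move=> [z Hz]; have := Hz ord_max; have := Hz (lift ord_max ord0).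
rewrite extend_max extend_lift => <- <-; congr (Defs.pmap F _ z).
by apply: functional_extensionality => -[v].
Qed.

Section FiniteSupport.
Variables B E : Type.

Definition detby n (e : 'I_n -> E) (P : (E -> B) -> (E -> B) -> Prop) :=
  forall psi psi', (forall i, psi (e i) = psi' (e i)) -> P psi psi'.

Definition merge n1 n2 (e1 : 'I_n1 -> E) (e2 : 'I_n2 -> E) : 'I_(n1 + n2) -> E :=
  fun k => match split k with inl a => e1 a | inr b => e2 b end.

Lemma detby_merge n1 n2 (e1 : 'I_n1 -> E) (e2 : 'I_n2 -> E) P1 P2 :
  detby e1 P1 -> detby e2 P2 ->
  detby (merge e1 e2) (fun psi psi' => P1 psi psi' /\ P2 psi psi').
Proof.
move=> H1 H2 psi psi' H; split.
  by apply: H1 => i; have := H (lshift n2 i); rewrite /merge (unsplitK (inl i)).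
by apply: H2 => i; have := H (rshift n1 i); rewrite /merge (unsplitK (inr i)).
Qed.

Lemma detby_big k (P : 'I_k -> (E -> B) -> (E -> B) -> Prop) :
  (forall i, exists n (e : 'I_n -> E), detby e (P i)) ->
  exists n (e : 'I_n -> E), detby e (fun psi psi' => forall i, P i psi psi').
Proof.
elim: k P => [|k IH] P H.
  by exists 0, (no_index E) => psi psi' _ [].
have [n1 [e1 H1]] := IH (fun i => P (lift ord_max i)) (fun i => H _).
have [n2 [e2 H2]] := H ord_max.
exists (n1 + n2), (merge e1 e2) => psi psi' Hag i.
have [h1 h2] := detby_merge H1 H2 Hag.
by case: (unliftP ord_max i) => [j ->|->].
Qed.

End FiniteSupport.

Section InducedAnalysis.
Variables (B : Type) (LR : LocalRep B).
Local Notation E := (lr_E B LR).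
Local Notation L := (@lr_L B LR).
Local Notation F := (inducedNSA B LR).

Lemma L_setT : L (fun _ => True).
Proof. by case: (lr_ultra B LR) => _ [H _]. Qed.

Lemma L_set0 : ~ L (fun _ => False).
Proof. by case: (lr_ultra B LR) => _ [_ [H _]]. Qed.

Lemma L_setI C D : L C -> L D -> L (fun psi => C psi /\ D psi).
Proof. by case: (lr_ultra B LR) => _ [_ [_ [H _]]]; apply: H. Qed.

Lemma L_sub C D : L C -> cylinder B E D -> (forall psi, C psi -> D psi) -> L D.
Proof. by case: (lr_ultra B LR) => _ [_ [_ [_ [H _]]]]; apply: H. Qed.

Lemma L_or_compl C : cylinder B E C -> L C \/ L (fun psi => ~ C psi).
Proof. by case: (lr_ultra B LR) => _ [_ [_ [_ [_ H]]]]; apply: H. Qed.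

Lemma cylinder_tuple n (e : 'I_n -> E) (R : ('I_n -> B) -> Prop) :
  cylinder B E (fun psi => R (fun i => psi (e i))).
Proof. by exists n, e, R. Qed.

Lemma cylinder_findep X (phi : (E -> B) -> X) (Q : X -> Prop) :
  findep B LR X phi -> cylinder B E (fun psi => Q (phi psi)).
Proof.
move=> [n [e He]].
exists n, e, (fun v => exists psi', (forall i, psi' (e i) = v i) /\ Q (phi psi')) => psi.
split=> [Qpsi|[psi' [Hag Qpsi']]]; first by exists psi.
by rewrite (He psi psi') // => i; rewrite Hag.
Qed.

Lemma L_exists C : L C -> exists psi, C psi.
Proof.
move=> LC; apply: NNPP => noC; apply: L_set0; apply: (L_sub LC) => [|psi Cpsi].
  by exists 0, (no_index E), (fun _ => False).
by apply: noC; exists psi.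
Qed.

Lemma L_bigcap n (P : 'I_n -> (E -> B) -> Prop) :
  (forall i, exists C, L C /\ forall psi, C psi -> P i psi) ->
  exists C, L C /\ forall psi, C psi -> forall i, P i psi.
Proof.
elim: n P => [|n IH] P H.
  by exists (fun _ => True); split=> [|psi _ []]; first exact: L_setT.
have [C1 [LC1 HC1]] := IH (fun i => P (lift ord_max i)) (fun i => H _).
have [C2 [LC2 HC2]] := H ord_max.
exists (fun psi => C1 psi /\ C2 psi); split; first exact: L_setI.
by move=> psi [/HC1 h1 /HC2 h2] i; case: (unliftP ord_max i) => [j ->|->].
Qed.

Lemma findep_dep n (A : 'I_n -> Type) (phi : forall i, (E -> B) -> A i) :
  (forall i, findep B LR (A i) (phi i)) ->
  findep B LR (forall i, A i) (fun psi i => phi i psi).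
Proof.
move=> H; have [m [e He]] := detby_big (P := fun i psi psi' => phi i psi = phi i psi') H.
by exists m, e => psi psi' Hag; apply: functional_extensionality_dep => i; apply: He.
Qed.

Lemma findep_factor X (phi : (E -> B) -> X) : findep B LR X phi ->
  exists n (e : 'I_n -> E) (f : ('I_n -> B) -> X),
    forall psi, phi psi = f (fun i => psi (e i)).
Proof.
move=> [n [e He]].
have inh : inhabited (E -> B) by have [psi _] := L_exists L_setT; exact: inhabits psi.
exists n, e, (fun v => phi (epsilon inh (fun psi => forall i, psi (e i) = v i))) => psi.
apply: He => i; symmetry.
exact: (epsilon_spec inh (fun psi' => forall i, psi' (e i) = psi (e i)) (ex_intro _ psi (fun _ => erefl))).
Qed.

Lemma eqL_refl X (phi : (E -> B) -> X) : eqL B LR X phi phi.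
Proof. by exists (fun _ => True); split; first exact: L_setT. Qed.

Lemma eqL_sym X (phi phi' : (E -> B) -> X) : eqL B LR X phi phi' -> eqL B LR X phi' phi.
Proof. by move=> [C [LC HC]]; exists C; split=> // psi /HC ->. Qed.

Lemma eqL_trans X (p1 p2 p3 : (E -> B) -> X) :
  eqL B LR X p1 p2 -> eqL B LR X p2 p3 -> eqL B LR X p1 p3.
Proof.
move=> [C [LC HC]] [D [LD HD]]; exists (fun psi => C psi /\ D psi).
by split=> [|psi [/HC -> /HD ->]]; first exact: L_setI.
Qed.

Lemma eqL_comp X Y (g : X -> Y) (p1 p2 : (E -> B) -> X) :
  eqL B LR X p1 p2 -> eqL B LR Y (fun psi => g (p1 psi)) (fun psi => g (p2 psi)).
Proof. by move=> [C [LC HC]]; exists C; split=> // psi /HC ->. Qed.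

Lemma eq_cls X (p1 p2 : (E -> B) -> X) : eqL B LR X p1 p2 -> cls B LR X p1 = cls B LR X p2.
Proof.
move=> H; apply: functional_extensionality => c; apply: propositional_extensionality.
split=> -[h1 h2]; split=> //; first exact: eqL_trans (eqL_sym H) h2.
exact: eqL_trans H h2.
Qed.

Lemma cls_eqL X (p1 p2 : (E -> B) -> X) : findep B LR X p2 ->
  cls B LR X p1 = cls B LR X p2 -> eqL B LR X p1 p2.
Proof.
move=> h2 E12; have : cls B LR X p2 p2 by split; [|exact: eqL_refl].
by rewrite -E12 => -[].
Qed.

Lemma eq_starClass X (p1 p2 : (E -> B) -> X) h1 h2 : eqL B LR X p1 p2 ->
  starClass B LR X p1 h1 = starClass B LR X p2 h2.
Proof. by move=> H; apply: sval_inj; apply: eq_cls. Qed.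

Lemma starClass_inj X (p1 p2 : (E -> B) -> X) h1 h2 :
  starClass B LR X p1 h1 = starClass B LR X p2 h2 -> eqL B LR X p1 p2.
Proof. by move=> /(f_equal (@proj1_sig _ _)); apply: cls_eqL. Qed.

Lemma starClass_rep X (x : starT B LR X) :
  starClass B LR X (sval (starRep B LR X x)) (proj1 (proj2_sig (starRep B LR X x))) = x.
Proof. by apply: sval_inj; rewrite /= -(proj2 (proj2_sig (starRep B LR X x))). Qed.

Lemma starT_class X (x : starT B LR X) : exists phi h, x = starClass B LR X phi h.
Proof. by exists (sval (starRep B LR X x)), (proj1 (proj2_sig (starRep B LR X x))); rewrite starClass_rep. Qed.

Lemma starMap_class X Y (g : X -> Y) (phi : (E -> B) -> X) h :
  starMap B LR X Y g (starClass B LR X phi h) =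
  starClass B LR Y (fun psi => g (phi psi)) (findep_comp B LR X Y g phi h).
Proof.
apply: eq_starClass; apply: eqL_comp; apply: eqL_sym.
have [hr Er] := proj2_sig (starRep B LR X (starClass B LR X phi h)).
exact: cls_eqL.
Qed.

Lemma gammaB_holds n (R : ('I_n -> B) -> Prop) (e : 'I_n -> E) :
  lr_holds B LR n R e <-> functor_holds F B n R (fun i => gammaB B LR (e i)).
Proof.
split=> [LRe | [y Hy]].
- have [psi0 Rpsi0] := L_exists LRe.
  pose phi psi := sig_retract (exist R _ Rpsi0) (fun i => psi (e i)).
  have hphi : findep B LR _ phi.
    exact: findep_comp (findep_dep (fun i => findep_eval B LR (e i))).
  exists (starClass B LR _ phi hphi) => i /=.
  rewrite starMap_class; apply: eq_starClass.
  by exists (fun psi => R (fun i => psi (e i))); split=> // psi Rpsi; rewrite sig_retractK.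
- have [phi [h Ey]] := starT_class y; subst y.
  have [C [LC HC]] : exists C, L C /\ forall psi, C psi ->
      forall i, proj1_sig (phi psi) i = psi (e i).
    apply: L_bigcap => i; move: (Hy i) => /=; rewrite starMap_class; exact: starClass_inj.
  apply: (L_sub LC (cylinder_tuple e R)) => psi Cpsi.
  have <- : proj1_sig (phi psi) = (fun i => psi (e i)).
    by apply: functional_extensionality; apply: HC.
  exact: proj2_sig.
Qed.

Lemma lr_holds_graph n (f : ('I_n -> B) -> B) (e : 'I_n -> E) e' :
  lr_holds B LR n.+1 (graph f) (extend e e') <->
  L (fun psi => psi e' = f (fun i => psi (e i))).
Proof.
rewrite /lr_holds; have -> // : (fun psi : E -> B => graph f (fun j => psi (extend e e' j))) =
    (fun psi => psi e' = f (fun i => psi (e i))).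
apply: functional_extensionality => psi; rewrite extend_comp /graph extend_max.
by congr (_ = f _); apply: functional_extensionality => i; rewrite extend_lift.
Qed.

Section Rectified.
Variables (N : NonstandardAnalysis) (theta : E -> pobj N B).
Hypothesis theta_iso : is_iso_to_functor_rep B LR N theta.

Lemma graph_realized n (f : ('I_n -> B) -> B) (e : 'I_n -> E) :
  exists e', L (fun psi => psi e' = f (fun i => psi (e i))).
Proof.
have [[thinv _ thinvK] theta_holds] := theta_iso.
have [_ pmap_comp] := nsa_functor N.
have [cinv _ cinvK] := nsa_prod N n (fun _ => B).
pose z := cinv (fun i => theta (e i)).
have z_coord i : Defs.pmap N (fun v : 'I_n -> B => v i) z = theta (e i).
  exact: (f_equal (fun G => G i) (cinvK (fun i => theta (e i)))).
pose y := Defs.pmap N (fun v => exist (graph f) _ (graph_extend f v)) z.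
pose x := Defs.pmap N (fun s : {v | graph f v} => proj1_sig s ord_max) y.
exists (thinv x); apply/lr_holds_graph/theta_holds.
exists y => j; rewrite /y -pmap_comp.
case: (unliftP ord_max j) => [i ->|->] /=; last by rewrite extend_max thinvK /x /y -pmap_comp.
rewrite extend_lift -z_coord; congr (Defs.pmap N _ z).
by apply: functional_extensionality => v /=; rewrite extend_lift.
Qed.

Lemma gammaB_inj : injective (gammaB B LR).
Proof.
move=> e1 e2 /starClass_inj [C [LC HC]].
have [[thinv thK _] theta_holds] := theta_iso.
have diag_holds : lr_holds B LR 2 (graph (fun v : 'I_1 -> B => v ord0)) (extend (fun _ => e1) e2).
  apply: (L_sub LC (cylinder_tuple _ _)) => psi /HC psiE.
  by rewrite /graph extend_max extend_lift.
move/theta_holds: diag_holds; rewrite extend_comp => /functor_holds_diag.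
by move=> /(can_inj thK).
Qed.

Lemma gammaB_surj x : exists e, gammaB B LR e = x.
Proof.
have [phi [h ->]] := starT_class x.
have [n [e [f phiE]]] := findep_factor h.
have [e' Le'] := graph_realized f e.
exists e'; apply: eq_starClass; exists (fun psi => psi e' = f (fun i => psi (e i))).
by split=> // psi ->; rewrite phiE.
Qed.

Lemma gammaB_iso : is_iso_to_functor_rep B LR F (gammaB B LR).
Proof.
split; last exact: gammaB_holds.
exact: inj_surj_bijective gammaB_inj gammaB_surj.
Qed.

End Rectified.

Lemma induced_functor_laws : functor_laws F.
Proof.
by split=> [A x | A1 A2 A3 f g x] /=; have [phi [h ->]] := starT_class x;
  rewrite !starMap_class; apply: eq_starClass; apply: eqL_refl.
Qed.

Lemma findep_const X (a : X) : findep B LR X (fun _ => a).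
Proof. by exists 0, (no_index E). Qed.

Definition starConst X (a : X) : starT B LR X := starClass B LR X (fun _ => a) (findep_const a).

Lemma starConst_inj X : injective (@starConst X).
Proof.
move=> a b /starClass_inj [C [LC HC]]; have [psi Cpsi] := L_exists LC; exact: HC Cpsi.
Qed.

Lemma starMap_const X Y (g : X -> Y) a : starMap B LR X Y g (starConst a) = starConst (g a).
Proof. by rewrite /starConst starMap_class; apply: eq_starClass; apply: eqL_refl. Qed.

Lemma starConst_surj X : finite_type X -> forall x : starT B LR X, exists a, starConst a = x.
Proof.
move=> [m [f [finv _ finvK]]] x; have [phi [h ->]] := starT_class x.
suff [i Li] : exists i, L (fun psi => phi psi = f i).
  by exists (f i); apply: eq_starClass; exists (fun psi => phi psi = f i); split=> // psi ->.
apply: NNPP => none.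
have avoid i : exists C, L C /\ forall psi, C psi -> phi psi <> f i.
  case: (L_or_compl (cylinder_findep (fun a => a = f i) h)) => [Li | Lnot].
    by case: none; exists i.
  by exists (fun psi => phi psi <> f i).
have [C [LC HC]] := L_bigcap avoid; have [psi Cpsi] := L_exists LC.
exact: HC Cpsi (finv (phi psi)) (esym (finvK _)).
Qed.

Lemma starConst_bij X : finite_type X -> bijective (@starConst X).
Proof. by move=> hX; apply: inj_surj_bijective (@starConst_inj X) (starConst_surj hX). Qed.

Lemma induced_fin_self_equivalence : fin_self_equivalence F.
Proof.
split; [|split].
- move=> X [m [f bij_f]] /=; exists m, (fun i => starConst (f i)).
  exact: bij_comp (starConst_bij (ex_intro _ m (ex_intro _ f bij_f))) bij_f.
- move=> A1 A2 hA1 hA2; apply: inj_surj_bijective => [f g fg | G].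
    apply: functional_extensionality => a; apply: starConst_inj.
    by rewrite -!starMap_const; apply: (f_equal (fun G => G (starConst a)) fg).
  pose g a := proj1_sig (constructive_indefinite_description _ (starConst_surj hA2 (G (starConst a)))).
  exists g; apply: functional_extensionality => x /=.
  have [a <-] := starConst_surj hA1 x; rewrite starMap_const /g.
  by case: constructive_indefinite_description.
- move=> C hC; exists C; split=> //.
  by have [g ? ?] := starConst_bij hC; exists g, (@starConst C).
Qed.

Lemma induced_preserves_finite_products : preserves_finite_products F.
Proof.
move=> n A; apply: inj_surj_bijective => [x y | y].
- have [phi [h ->]] := starT_class x; have [phi' [h' ->]] := starT_class y => /= coord.
  have [C [LC HC]] : exists C, L C /\ forall psi, C psi -> forall i, phi psi i = phi' psi i.
    apply: L_bigcap => i; move: (f_equal (fun G => G i) coord) => /=.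
    by rewrite !starMap_class; apply: starClass_inj.
  apply: eq_starClass; exists C; split=> // psi Cpsi.
  by apply: functional_extensionality_dep; apply: HC.
- pose r i := sval (starRep B LR (A i) (y i)).
  have hr i : findep B LR (A i) (r i) := proj1 (proj2_sig (starRep B LR (A i) (y i))).
  exists (starClass B LR _ _ (findep_dep hr)).
  apply: functional_extensionality_dep => i /=; rewrite starMap_class -[RHS]starClass_rep.
  by apply: eq_starClass; apply: eqL_refl.
Qed.

Lemma induced_preserves_equalizers : preserves_equalizers F.
Proof.
move=> A1 A2 f g; split=> [x y | x].
- have [phi [h ->]] := starT_class x; have [phi' [h' ->]] := starT_class y.
  rewrite /= !starMap_class => /starClass_inj [C [LC HC]].
  by apply: eq_starClass; exists C; split=> // psi /HC; apply: sval_inj.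
- have [phi [h ->]] := starT_class x; split=> [[y <-] | ].
    have [chi [hchi ->]] := starT_class y; rewrite /= !starMap_class.
    apply: eq_starClass; exists (fun _ => True); split; first exact: L_setT.
    by move=> psi _; apply: (proj2_sig (chi psi)).
  rewrite /= !starMap_class => /starClass_inj [C [LC HC]].
  have [psi0 /HC fg0] := L_exists LC.
  pose s psi := sig_retract (exist (fun a => f a = g a) _ fg0) (phi psi).
  exists (starClass B LR _ s (findep_comp B LR _ _ _ _ h)); rewrite /= starMap_class.
  by apply: eq_starClass; exists C; split=> // psi /HC fg; rewrite sig_retractK.
Qed.

Definition inducedNSA_NSA : NonstandardAnalysis :=
  {| nsa_F := F; nsa_functor := induced_functor_laws;
     nsa_fin := induced_fin_self_equivalence;
     nsa_prod := induced_preserves_finite_products;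
     nsa_eq := induced_preserves_equalizers |}.

End InducedAnalysis.

Theorem mainTheorem4 (B : Type) (LR : LocalRep B) :
  ~ finite_type B ->
  ((exists N : NonstandardAnalysis, iso_to_functor_rep B LR N)
     <-> iso_to_functor_rep B LR (inducedNSA B LR)) /\
  (iso_to_functor_rep B LR (inducedNSA B LR) ->
     is_iso_to_functor_rep B LR (inducedNSA B LR) (gammaB B LR)).
Proof.
move=> _.
have gammaB_of_nsa (N : NonstandardAnalysis) :
    iso_to_functor_rep B LR N -> is_iso_to_functor_rep B LR (inducedNSA B LR) (gammaB B LR).
  by move=> [theta theta_iso]; apply: gammaB_iso theta_iso.
split; [split|].
- by move=> [N /gammaB_of_nsa iso]; exists (gammaB B LR).
- by move=> iso; exists (inducedNSA_NSA LR).
- exact: gammaB_of_nsa (inducedNSA_NSA LR).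
Qed.
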